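(* For every LCNF formula $\Phi$ and any two labelled clauses $C_1^{L_1}, C_2^{L_2} \in \Phi$ to which self-subsuming resolution applies, $\mathsf{MCS}(\mathsf{ssr}(\Phi, C_1^{L_1}, C_2^{L_2})) = \mathsf{MCS}(\Phi)$.
   Context: Fix a countable set $Lbls$ of labels. A labelled clause $C^L$ is a pair of a clause $C$ (a finite set of literals) and a finite set $L \subseteq Lbls$. An LCNF formula $\Phi$ is a finite set of labelled clauses; $Cls(\Phi) = \{C : C^L \in \Phi\}$ and $Lbls(\Phi) = \bigcup_{C^L\in\Phi} L$. $\Phi$ is satisfiable iff $Cls(\Phi)$ is. For $M \subseteq Lbls(\Phi)$, the induced subformula is $\Phi|_M = \{C^L \in \Phi : L \subseteq M\}$. A set $R \subseteq Lbls(\Phi)$ is an MCS of $\Phi$ if (i) $\Phi|_{Lbls(\Phi)\setminus R}$ is satisfiable and (ii) for every $l \in R$, $\Phi|_{(Lbls(\Phi)\setminus R)\cup\{l\}}$ is unsatisfiable; $\mathsf{MCS}(\Phi)$ is the set of all MCSes of $\Phi$. Self-subsuming resolution: if $C_1^{L_1} = (l \vee A)^{L_1}$ and $C_2^{L_2} = (\neg l \vee B)^{L_2}$ are in $\Phi$ with $A \subset B$ and $L_1 \subseteq L_2$, then $\mathsf{ssr}(\Phi, C_1^{L_1}, C_2^{L_2}) = (\Phi \setminus \{C_2^{L_2}\}) \cup \{B^{L_2}\}$. *)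

From HB Require Import structures.
From mathcomp Require Import all_boot.
From mathcomp Require Import finmap.
Set Implicit Arguments. Unset Strict Implicit. Unset Printing Implicit Defensive.
Local Open Scope fset_scope.

Section LCNF.
Variables (V : choiceType) (Lb : countType).

(* A literal is a variable with a polarity (true = positive). *)
Definition lit := (V * bool)%type.
Definition neg_lit (l : lit) : lit := (l.1, ~~ l.2).

Definition clause := {fset lit}.
Definition lclause := (clause * {fset Lb})%type.
Definition lcnf := {fset lclause}.

Definition Cls (Phi : lcnf) : {fset clause} := [fset c.1 | c in Phi].
Definition Lbls (Phi : lcnf) : {fset Lb} := \bigcup_(c <- Phi) c.2.

Definition lit_true (a : V -> bool) (l : lit) : bool := a l.1 == l.2.
Definition clause_sat (a : V -> bool) (C : clause) : Prop :=
  exists2 l, l \in C & lit_true a l.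
Definition cls_satisfiable (S : {fset clause}) : Prop :=
  exists a : V -> bool, forall C, C \in S -> clause_sat a C.
Definition satisfiable (Phi : lcnf) : Prop := cls_satisfiable (Cls Phi).

Definition induced (Phi : lcnf) (M : {fset Lb}) : lcnf :=
  [fset c in Phi | c.2 `<=` M].

Definition is_MCS (Phi : lcnf) (R : {fset Lb}) : Prop :=
  [/\ R `<=` Lbls Phi,
      satisfiable (induced Phi (Lbls Phi `\` R))
    & forall l, l \in R -> ~ satisfiable (induced Phi ((Lbls Phi `\` R) `|` [fset l]))].

(* ssr(Phi, C1^L1, C2^L2) = (Phi \ {C2^L2}) u {B^L2} *)
Definition ssr (Phi : lcnf) (c2 : lclause) (B : clause) : lcnf :=
  (Phi `\ c2) `|` [fset (B, c2.2)].

End LCNF.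

(* Self-subsuming resolution replaces C2 = ¬l ∨ B by B, keeping the labels L2,
   so it changes neither Lbls nor the satisfiability of any induced subformula
   Phi|_M: B entails C2, and whenever L2 ⊆ M the clause C1 = l ∨ A (with
   L1 ⊆ L2 ⊆ M) is present too, and the resolvent of C1 and C2 is A ∨ B = B.
   Being an MCS is determined by these two data. *)
From mathcomp Require Import all_boot.
From mathcomp Require Import finmap.
Set Implicit Arguments. Unset Strict Implicit. Unset Printing Implicit Defensive.
Local Open Scope fset_scope.

Section SelfSubsumingResolution.
Variables (V : choiceType) (Lb : countType).
Implicit Types (Phi Psi : lcnf V Lb) (M R : {fset Lb}) (a : V -> bool).

Lemma clause_sat_sub a (C D : clause V) :
  C `<=` D -> clause_sat a C -> clause_sat a D.
Proof. by move=> /fsubsetP CD [x /CD xD xt]; exists x. Qed.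

Lemma clause_sat_resolvent a (l : lit V) (A B : clause V) :
  A `<=` B -> clause_sat a (l |` A) -> clause_sat a (neg_lit l |` B) ->
  clause_sat a B.
Proof.
move=> AB [x + xt] [y + yt]; rewrite !inE => /orP [/eqP xl|xA]; last first.
  by exists x => //; apply: (fsubsetP AB).
case/orP=> [/eqP yl|yB]; last by exists y.
by move: xt yt; rewrite /lit_true xl yl /= => /eqP ->; case: (l.2).
Qed.

Lemma satisfiableE Phi :
  satisfiable Phi <-> exists a, forall c, c \in Phi -> clause_sat a c.1.
Proof.
split=> [[a Ha]|[a Ha]]; exists a.
- by move=> c cP; apply: Ha; apply/imfsetP; exists c.
- by move=> C /imfsetP [c cP ->]; exact: Ha.
Qed.

Lemma LblsP Phi x : reflect (exists2 c, c \in Phi & x \in c.2) (x \in Lbls Phi).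
Proof.
rewrite /Lbls; apply: (iffP (bigfcupP _ _ _ _)).
  by case=> c /andP [cP _] xc; exists c.
by case=> c cP xc; exists c; rewrite ?cP.
Qed.

Lemma Lbls_ssr Phi (c : lclause V Lb) (B : clause V) :
  c \in Phi -> Lbls (ssr Phi c B) = Lbls Phi.
Proof.
move=> cP; apply/fsetP => x; apply/LblsP/LblsP => [[d]|[d dP xd]].
  by rewrite !inE => /orP [/andP [_ dP]|/eqP ->]; [exists d | exists c].
have [dc|dc] := eqVneq d c.
  by exists (B, c.2); rewrite ?inE ?eqxx ?orbT // -dc.
by exists d; rewrite // !inE dc dP.
Qed.

Lemma is_MCS_congr Phi Psi R :
  Lbls Phi = Lbls Psi ->
  (forall M, satisfiable (induced Phi M) <-> satisfiable (induced Psi M)) ->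
  is_MCS Phi R <-> is_MCS Psi R.
Proof.
move=> eqL eqS; rewrite /is_MCS eqL.
by split=> [[h1 /eqS h2 h3]|[h1 /eqS h2 h3]];
  split=> // x xR /eqS; exact: h3.
Qed.

Lemma satisfiable_induced_ssr Phi (L1 L2 : {fset Lb}) (l : lit V)
    (A B : clause V) M :
  (l |` A, L1) \in Phi -> (neg_lit l |` B, L2) \in Phi ->
  A `<=` B -> L1 `<=` L2 ->
  satisfiable (induced (ssr Phi (neg_lit l |` B, L2) B) M) <->
  satisfiable (induced Phi M).
Proof.
move=> C1P C2P AB L12; rewrite !satisfiableE.
split=> -[a Ha]; exists a => c; rewrite !inE.
- case/andP=> cP cM; have [cC2|cC2] := eqVneq c (neg_lit l |` B, L2).
    rewrite cC2; apply: clause_sat_sub (fsubsetU1 _ _) _.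
    by apply: (Ha (B, L2)); rewrite !inE eqxx orbT; move: cM; rewrite cC2.
  by apply: Ha; rewrite !inE cC2 cP cM.
- case/andP=> /orP [/andP [_ cP] cM|/eqP -> /= L2M].
    by apply: Ha; rewrite !inE cP.
  apply: (clause_sat_resolvent AB).
    by apply: (Ha (l |` A, L1)); rewrite !inE C1P (fsubset_trans L12).
  by apply: (Ha (neg_lit l |` B, L2)); rewrite !inE C2P.
Qed.

End SelfSubsumingResolution.

Theorem proposition4 (V : choiceType) (Lb : countType) (Phi : lcnf V Lb)
  (C1 C2 : clause V) (L1 L2 : {fset Lb}) (l : lit V) (A B : clause V) :
  (C1, L1) \in Phi -> (C2, L2) \in Phi ->
  C1 = l |` A -> C2 = neg_lit l |` B ->
  A `<` B -> L1 `<=` L2 ->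
  forall R : {fset Lb}, is_MCS (ssr Phi (C2, L2) B) R <-> is_MCS Phi R.
Proof.
move=> C1P C2P E1 E2 /fproper_sub AB L12 R; subst C1 C2.
apply: is_MCS_congr; first exact: Lbls_ssr.
by move=> M; exact: satisfiable_induced_ssr C1P C2P AB L12.
Qed.
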